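(* Let $t$ be a normal $\lambda$-term, $v$ a $\lambda$-term, and $\alpha,x$ variables with $x\in Fv(t)$, and let $x_1,\dots,x_n$ ($n\ge 0$) be variables distinct from $\alpha$. If $t[\lambda x_1\dots\lambda x_n\alpha/x]\rightarrow_\beta v$, then $\alpha\in Fv(v)$.
   Context: $\lambda$-terms are those of the untyped $\lambda$-calculus; $Fv(t)$ is the set of free variables of $t$; $t[u/x]$ is capture-avoiding substitution; $\rightarrow_\beta$ denotes $\beta$-reduction in zero or more steps; a term is normal if it contains no $\beta$-redex. *)

From Stdlib Require Import Arith.

Inductive term : Type :=
| Var : nat -> term
| App : term -> term -> term
| Lam : term -> term.

Fixpoint lift (d c : nat) (t : term) : term :=
  match t with
  | Var k => if c <=? k then Var (k + d) else Var k
  | App a b => App (lift d c a) (lift d c b)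
  | Lam b => Lam (lift d (S c) b)
  end.

Fixpoint bsubst (u : term) (k : nat) (t : term) : term :=
  match t with
  | Var m => if m =? k then lift k 0 u
             else if k <? m then Var (pred m) else Var m
  | App a b => App (bsubst u k a) (bsubst u k b)
  | Lam b => Lam (bsubst u (S k) b)
  end.

(* capture-avoiding substitution t[u/x] of the free variable x by u,
   all other free variables keep their identity (named-style substitution) *)
Fixpoint fsubst_at (d : nat) (u : term) (x : nat) (t : term) : term :=
  match t with
  | Var m => if m =? x + d then lift d 0 u else Var m
  | App a b => App (fsubst_at d u x a) (fsubst_at d u x b)
  | Lam b => Lam (fsubst_at (S d) u x b)
  end.

Definition fsubst (u : term) (x : nat) (t : term) : term := fsubst_at 0 u x t.

Fixpoint free_in (x : nat) (t : term) : Prop :=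
  match t with
  | Var m => m = x
  | App a b => free_in x a \/ free_in x b
  | Lam b => free_in (S x) b
  end.

Inductive beta : term -> term -> Prop :=
| beta_redex : forall b u, beta (App (Lam b) u) (bsubst u 0 b)
| beta_appl : forall a a' b, beta a a' -> beta (App a b) (App a' b)
| beta_appr : forall a b b', beta b b' -> beta (App a b) (App a b')
| beta_lam : forall b b', beta b b' -> beta (Lam b) (Lam b').

Inductive beta_star : term -> term -> Prop :=
| beta_refl : forall t, beta_star t t
| beta_step : forall t u v, beta t u -> beta_star u v -> beta_star t v.

Fixpoint normal (t : term) : Prop :=
  match t with
  | Var _ => True
  | Lam b => normal b
  | App a b => normal a /\ normal b /\ (match a with Lam _ => False | _ => True end)
  end.

Fixpoint lams (n : nat) (t : term) : term :=
  match n with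
  | 0 => t
  | S n' => Lam (lams n' t)
  end.

(* After the substitution every redex has the shape (λy_1…λy_m. α) u: the only
   abstractions in head position are the substituted selectors, because t is
   normal.  Such a redex contracts to λy_2…λy_m. α, again a selector, so this
   shape is stable under β-reduction, and contracting a selector redex never
   erases α.  Hence α stays free along every reduction sequence. *)
From Stdlib Require Import Arith Lia.

Lemma lams_var_irreducible {m k : nat} {t : term} :
  beta (lams m (Var k)) t -> False.
Proof.
  revert t; induction m as [|m IH]; intros t H; inversion H; subst; eauto.
Qed.

Lemma bsubst_lams_var (j k v : nat) (u : term) : k + j < v ->
  bsubst u k (lams j (Var v)) = lams j (Var (pred v)).
Proof.
  revert k v; induction j as [|j IH]; intros k v Hv; simpl.
  - destruct (Nat.eqb_spec v k); [lia|].
    destruct (Nat.ltb_spec k v); [reflexivity|lia].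
  - rewrite IH by lia; reflexivity.
Qed.

Lemma lift_lams_var (j d c v : nat) : c + j <= v ->
  lift d c (lams j (Var v)) = lams j (Var (v + d)).
Proof.
  revert c v; induction j as [|j IH]; intros c v Hv; simpl.
  - destruct (Nat.leb_spec c v); [reflexivity|lia].
  - rewrite IH by lia; reflexivity.
Qed.

Lemma free_in_lams_var (j k : nat) : free_in k (lams j (Var (k + j))).
Proof.
  revert k; induction j as [|j IH]; intro k; simpl.
  - lia.
  - rewrite <- Nat.add_succ_comm; apply IH.
Qed.

Section Selectors.
Variable alpha : nat.

(* Under [d] binders the variable α is [alpha + d]; the selector
   λy_1…λy_m. α is then [lams m (Var (alpha + d + m))].  [spine d t]: t is
   an application whose head is a variable or a selector; [shaped d t]:
   t is a spine under abstractions. *)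
Inductive spine : nat -> term -> Prop :=
| spine_var : forall d k, spine d (Var k)
| spine_selector : forall d m, spine d (lams m (Var (alpha + d + m)))
| spine_app : forall d a b, spine d a -> shaped d b -> spine d (App a b)
with shaped : nat -> term -> Prop :=
| shaped_lam : forall d b, shaped (S d) b -> shaped d (Lam b)
| shaped_spine : forall d t, spine d t -> shaped d t.

Lemma spine_lam_selector {d : nat} {b : term} : spine d (Lam b) ->
  exists m, b = lams m (Var (alpha + d + S m)).
Proof.
  intro H; inversion H as [|d' [|m]|]; subst; try discriminate; eauto.
Qed.

Lemma spine_lam_irreducible {d : nat} {b b' : term} :
  spine d (Lam b) -> beta b b' -> False.
Proof.
  intros Hs Hb; destruct (spine_lam_selector Hs) as [m ->].
  exact (lams_var_irreducible Hb).
Qed.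

Lemma spine_app_inv (d : nat) (a b : term) : spine d (App a b) ->
  spine d a /\ shaped d b.
Proof.
  intro H; inversion H as [|d' [|m]|]; subst; try discriminate; auto.
Qed.

Lemma bsubst_selector (d m : nat) (u : term) :
  bsubst u 0 (lams m (Var (alpha + d + S m))) = lams m (Var (alpha + d + m)).
Proof.
  rewrite bsubst_lams_var by lia; f_equal; f_equal; lia.
Qed.

Lemma beta_spine_shaped {t t' : term} : beta t t' -> forall d,
  (spine d t -> spine d t') /\ (shaped d t -> shaped d t').
Proof.
  induction 1 as [b u|a a' b _ IH|a b b' _ IH|b b' Hb IH]; intro d.
  all: match goal with |- (spine _ ?s -> spine _ ?s') /\ _ =>
         enough (Hsp : spine d s -> spine d s') end.
  all: try (split; [exact Hsp|]; intro G; inversion G; subst; auto using shaped_spine).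
  all: try (intro Hs; apply spine_app_inv in Hs as [Ha Hb']).
  - destruct (spine_lam_selector Ha) as [m ->].
    rewrite bsubst_selector; apply spine_selector.
  - apply spine_app; auto; apply (IH d); auto.
  - apply spine_app; auto; apply (IH d); auto.
  - apply shaped_lam, (IH (S d)); auto.
  - intro Hs; destruct (spine_lam_irreducible Hs Hb).
Qed.

Lemma beta_shaped {t t' : term} {d : nat} :
  beta t t' -> shaped d t -> shaped d t'.
Proof. intro H; apply (beta_spine_shaped H d). Qed.

Lemma beta_shaped_free {t t' : term} : beta t t' -> forall d,
  shaped d t -> free_in (alpha + d) t -> free_in (alpha + d) t'.
Proof.
  induction 1 as [b u|a a' b Ha IH|a b b' _ IH|b b' Hb IH]; intros d G F.
  all: inversion G as [|d' s Hs]; subst.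
  all: try (apply spine_app_inv in Hs as [Hl Hr]).
  - destruct (spine_lam_selector Hl) as [m ->].
    rewrite bsubst_selector; apply free_in_lams_var.
  - destruct F; [left; apply IH|right]; auto using shaped_spine.
  - destruct F; [left|right; apply IH]; auto.
  - simpl in *; rewrite <- Nat.add_succ_r in *; auto.
  - destruct (spine_lam_irreducible Hs Hb).
Qed.

Lemma beta_star_shaped_free {t v : term} {d : nat} :
  beta_star t v -> shaped d t -> free_in (alpha + d) t -> free_in (alpha + d) v.
Proof.
  induction 1 as [|t u v Htu _ IH]; intros G F; auto.
  apply IH; [exact (beta_shaped Htu G)|exact (beta_shaped_free Htu _ G F)].
Qed.

Section Substitution.
Variables n x : nat.

Let sel := lams n (Var (alpha + n)).

Lemma lift_selector (d : nat) : lift d 0 sel = lams n (Var (alpha + d + n)).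
Proof. unfold sel; rewrite lift_lams_var by lia; f_equal; f_equal; lia. Qed.

Lemma normal_fsubst_shaped (t : term) : normal t -> forall d,
  shaped d (fsubst_at d sel x t) /\
  (match t with Lam _ => False | _ => True end -> spine d (fsubst_at d sel x t)).
Proof.
  induction t as [k|t1 IH1 t2 IH2|t IH]; simpl; intros N d.
  - assert (Hs : spine d (if k =? x + d then lift d 0 sel else Var k)).
    { destruct (k =? x + d); [rewrite lift_selector|]; constructor. }
    auto using shaped_spine.
  - destruct N as (N1 & N2 & N3).
    assert (Hs : spine d (App (fsubst_at d sel x t1) (fsubst_at d sel x t2))).
    { apply spine_app; [apply (IH1 N1 d)|apply (IH2 N2 d)]; auto. }
    auto using shaped_spine.
  - split; [apply shaped_lam, (IH N (S d))|tauto].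
Qed.

Lemma free_in_fsubst_selector (t : term) (d : nat) : free_in (x + d) t ->
  free_in (alpha + d) (fsubst_at d sel x t).
Proof.
  revert d; induction t as [k|t1 IH1 t2 IH2|t IH]; simpl; intros d F.
  - subst; rewrite Nat.eqb_refl, lift_selector; apply free_in_lams_var.
  - destruct F; [left|right]; auto.
  - rewrite <- Nat.add_succ_r in *; auto.
Qed.

End Substitution.
End Selectors.

Theorem lemma2p1p2 (t v : term) (alpha x n : nat) :
  normal t -> free_in x t ->
  beta_star (fsubst (lams n (Var (alpha + n))) x t) v ->
  free_in alpha v.
Proof.
  intros N F B; rewrite <- (Nat.add_0_r alpha).
  apply (beta_star_shaped_free alpha B).
  - exact (proj1 (normal_fsubst_shaped alpha n x t N 0)).
  - apply free_in_fsubst_selector; rewrite Nat.add_0_r; exact F.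
Qed.
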